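(* Let $Z$ be the tree obtained from four disjoint 3-stars $S_0,S_1,S_2,S_3$, where $S_i$ has center $u_i$ and leaves $a_i,b_i,c_i$, by identifying $c_0$ with $c_1$, $a_0$ with $c_2$, and $a_1$ with $c_3$ (so $Z$ has $13$ vertices, maximum degree $3$ and diameter $8$). Then $\gamma^{\rm ID}(Z)=8<\frac23|V(Z)|$.
   Context: An identifying code of a graph $G$ is a set $C\subseteq V(G)$ such that every vertex $v$ has $N[v]\cap C\neq\emptyset$ and for all distinct $u,v$, $N[u]\cap C \ne N[v]\cap C$, where $N[v]$ is the closed neighborhood; $\gamma^{\rm ID}(G)$ is its minimum size. *)

From mathcomp Require Import all_boot all_order.
Set Implicit Arguments. Unset Strict Implicit. Unset Printing Implicit Defensive.

Definition cnbhd (T : finType) (e : rel T) (v : T) : {set T} :=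
  [set w | (w == v) || e v w].

Definition is_idcode (T : finType) (e : rel T) (C : {set T}) : bool :=
  [forall v, cnbhd e v :&: C != set0] &&
  [forall u, forall v, (u != v) ==> (cnbhd e u :&: C != cnbhd e v :&: C)].

(* Minimum size of an identifying code; #|T|.+1 if none exists. *)
Definition gammaID (T : finType) (e : rel T) : nat :=
  \big[minn/#|T|.+1]_(C : {set T} | is_idcode e C) #|C|.

(* The tree Z on vertex set 'I_13, labelled:
   0 u0, 1 u1, 2 u2, 3 u3, 4 a0 (= c2), 5 b0, 6 c0 (= c1),
   7 a1 (= c3), 8 b1, 9 a2, 10 b2, 11 a3, 12 b3. *)
Definition Z_edges : seq (nat * nat) :=
  [:: (0,4); (0,5); (0,6);      (* star S0: u0 - a0, b0, c0 *)
      (1,6); (1,7); (1,8);      (* star S1: u1 - c1=c0, a1, b1 *)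
      (2,9); (2,10); (2,4);     (* star S2: u2 - a2, b2, c2=a0 *)
      (3,11); (3,12); (3,7)].   (* star S3: u3 - a3, b3, c3=a1 *)

Definition Z_adj : rel 'I_13 :=
  fun x y => ((nat_of_ord x, nat_of_ord y) \in Z_edges) ||
             ((nat_of_ord y, nat_of_ord x) \in Z_edges).

From mathcomp Require Import all_boot all_order.

Set Implicit Arguments.
Unset Strict Implicit.
Unset Printing Implicit Defensive.

(* Upper bound: the eight vertices u0, u1, u2, u3, a0, a1, a2, a3 form an
   identifying code.

   Lower bound: Z splits into two disjoint branches {u2, a2, b2, a0, u0, b0}
   and {u3, a3, b3, a1, u1, b1}, and every identifying code contains at least
   four vertices of each.  In the first branch, the leaves a2 and b2 force two
   of u2, a2, b2 into the code, and the leaf b0 forces u0 or b0.  If a0 is in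
   the code this gives four.  Otherwise, separating u2 from a2 and from b2
   forces b2 and a2, while dominating a0, separating a0 from b0 and
   dominating b0 force two of u2, u0, b0. *)

Section IdentifyingCodes.

Variables (T : finType) (e : rel T) (C : {set T}).
Hypothesis C_idcode : is_idcode e C.

Lemma idcode_dominated_by (v : T) (r : seq T) :
  {subset cnbhd e v <= r} -> has (mem C) r.
Proof.
move=> Nv_r; case/andP: C_idcode => /forallP/(_ v)/set0Pn[w] + _.
by rewrite inE => /andP[/Nv_r w_r wC]; apply/hasP; exists w.
Qed.

Lemma idcode_separated_by (u v : T) (r : seq T) : u != v ->
  {subset [pred w | (w \in cnbhd e u) != (w \in cnbhd e v)] <= r} ->
  has (mem C) r.
Proof.
move=> neq_uv sep_r; case/andP: C_idcode => _ /forallP/(_ u)/forallP/(_ v).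
rewrite neq_uv /= => /eqP neq_codes; apply/hasP.
have [w wC Nuv_w] : exists2 w, w \in C & (w \in cnbhd e u) != (w \in cnbhd e v).
  apply/exists_inP; apply: contra_notT neq_codes => /exists_inPn same.
  apply/setP => w; rewrite !in_setI.
  by case: (boolP (w \in C)) => [/same/negbNE/eqP-> | _]; rewrite ?andbF.
by exists w => //; apply: sep_r.
Qed.

(* In Z, (s, l1, l2, m, t, l) is (u2, a2, b2, a0, u0, b0) or its mirror image
   (u3, a3, b3, a1, u1, b1). *)
Variables s l1 l2 m t l : T.
Hypotheses (N_l1 : cnbhd e l1 = [set l1; s]) (N_l2 : cnbhd e l2 = [set l2; s]).
Hypothesis N_s : cnbhd e s = [set s; l1; l2; m].
Hypotheses (N_m : cnbhd e m = [set m; s; t]) (N_l : cnbhd e l = [set l; t]).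
Hypotheses (l1_neq_l2 : l1 != l2) (s_neq_l1 : s != l1) (s_neq_l2 : s != l2).
Hypothesis m_neq_l : m != l.

Lemma idcode_branch_count : 4 <= count (mem C) [:: s; l1; l2; m; t; l].
Proof.
have l1_or_s : has (mem C) [:: l1; s].
  by apply: (idcode_dominated_by (v := l1)) => w; rewrite N_l1 !inE.
have l2_or_s : has (mem C) [:: l2; s].
  by apply: (idcode_dominated_by (v := l2)) => w; rewrite N_l2 !inE.
have l_or_t : has (mem C) [:: l; t].
  by apply: (idcode_dominated_by (v := l)) => w; rewrite N_l !inE.
have m_or_s_or_t : has (mem C) [:: m; s; t].
  by apply: (idcode_dominated_by (v := m)) => w; rewrite N_m !inE -orbA.
have l1_or_l2 : has (mem C) [:: l1; l2].
  apply: (idcode_separated_by l1_neq_l2) => w; rewrite /= N_l1 N_l2 !inE.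
  by case: (w == l1); case: (w == l2); case: (w == s).
have l2_or_m : has (mem C) [:: l2; m].
  apply: (idcode_separated_by s_neq_l1) => w; rewrite /= N_s N_l1 !inE.
  by case: (w == s); case: (w == l1); case: (w == l2); case: (w == m).
have l1_or_m : has (mem C) [:: l1; m].
  apply: (idcode_separated_by s_neq_l2) => w; rewrite /= N_s N_l2 !inE.
  by case: (w == s); case: (w == l1); case: (w == l2); case: (w == m).
have m_or_s_or_l : has (mem C) [:: m; s; l].
  apply: (idcode_separated_by m_neq_l) => w; rewrite /= N_m N_l !inE.
  by case: (w == m); case: (w == s); case: (w == t); case: (w == l).
move: l1_or_s l2_or_s l_or_t m_or_s_or_t l1_or_l2 l2_or_m l1_or_m m_or_s_or_l.
rewrite /=.
by case: (s \in C); case: (l1 \in C); case: (l2 \in C); case: (m \in C);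
  case: (t \in C); case: (l \in C).
Qed.

End IdentifyingCodes.

Lemma count_mem_le_card (T : finType) (A : {pred T}) (r : seq T) :
  uniq r -> count (mem A) r <= #|A|.
Proof.
move=> r_uniq; rewrite -size_filter.
have /card_uniqP <- := filter_uniq (mem A) r_uniq.
by apply/subset_leq_card/subsetP => x; rewrite mem_filter => /andP[].
Qed.

Lemma is_idcode_seqE (T : finType) (e : rel T) (c : pred T) (r : seq T) :
  (forall x, x \in r) ->
  is_idcode e [set w | c w] =
  all (fun v => has (fun w => c w && ((w == v) || e v w)) r) r &&
  all (fun u => all (fun v => (u != v) ==>
    has (fun w => c w && (((w == u) || e u w) != ((w == v) || e v w))) r) r) r.
Proof.
move=> r_full; congr andb.
  apply/forallP/allP => [dom v _ | dom v].
    have /set0Pn[w] := dom v; rewrite !inE => /andP[N_w c_w].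
    by apply/hasP; exists w; rewrite ?c_w.
  have /hasP[w _ /andP[c_w N_w]] := dom v (r_full v).
  by apply/set0Pn; exists w; rewrite !inE N_w c_w.
have sets_differ (A B : {set T}) :
    (A != B) = has (fun w => (w \in A) != (w \in B)) r.
  rewrite -[has _ r]negbK -all_predC; congr negb.
  apply/eqP/allP => [-> w _ | same]; first by rewrite /= eqxx.
  by apply/setP => w; apply/eqP/negbNE/same.
have sep_uv u v :
    (cnbhd e u :&: [set w | c w] != cnbhd e v :&: [set w | c w]) =
    has (fun w => c w && (((w == u) || e u w) != ((w == v) || e v w))) r.
  rewrite sets_differ; apply: eq_has => w; rewrite !inE.
  by case: (c w); rewrite ?andbT ?andbF.
apply/forallP/allP => [sep u _ | sep u].
  by apply/allP => v _; move/forallP/(_ v): (sep u); rewrite sep_uv.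
apply/forallP => v; move/allP/(_ v (r_full v)): (sep u (r_full u)).
by rewrite sep_uv.
Qed.

Lemma bigminn_le (I : eqType) (r : seq I) (P : pred I) (F : I -> nat) x j :
  j \in r -> P j -> \big[minn/x]_(i <- r | P i) F i <= F j.
Proof.
elim: r => [|i r IHr] //= j_ir Pj; rewrite big_cons.
case: (predU1P j_ir) => [<- | j_r]; first by rewrite Pj geq_minl.
case: (P i); last exact: IHr.
exact: leq_trans (geq_minr _ _) (IHr j_r Pj).
Qed.

Lemma gammaID_eq_card (T : finType) (e : rel T) (C0 : {set T}) :
  is_idcode e C0 -> (forall C, is_idcode e C -> #|C0| <= #|C|) ->
  gammaID e = #|C0|.
Proof.
move=> C0_idcode C0_min; apply/eqP; rewrite eqn_leq.
rewrite (bigminn_le _ _ (mem_index_enum C0)) //=.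
apply: (big_ind (leq #|C0|)) => [|m n le_m le_n|]; last exact: C0_min.
  exact: leqW (max_card _).
by rewrite leq_min le_m le_n.
Qed.

Definition u0 : 'I_13 := @Ordinal 13 0 isT.
Definition u1 : 'I_13 := @Ordinal 13 1 isT.
Definition u2 : 'I_13 := @Ordinal 13 2 isT.
Definition u3 : 'I_13 := @Ordinal 13 3 isT.
Definition a0 : 'I_13 := @Ordinal 13 4 isT.
Definition b0 : 'I_13 := @Ordinal 13 5 isT.
Definition c0 : 'I_13 := @Ordinal 13 6 isT.
Definition a1 : 'I_13 := @Ordinal 13 7 isT.
Definition b1 : 'I_13 := @Ordinal 13 8 isT.
Definition a2 : 'I_13 := @Ordinal 13 9 isT.
Definition b2 : 'I_13 := @Ordinal 13 10 isT.
Definition a3 : 'I_13 := @Ordinal 13 11 isT.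
Definition b3 : 'I_13 := @Ordinal 13 12 isT.

Lemma mem_Z_vertices v :
  v \in [:: u0; u1; u2; u3; a0; b0; c0; a1; b1; a2; b2; a3; b3].
Proof.
by case: v => i lt_i_13; rewrite !inE; do 13?case: i lt_i_13 => [|i] lt_i_13.
Qed.

Definition Z_code : {set 'I_13} :=
  [set w in [:: u0; u1; u2; u3; a0; a1; a2; a3]].

Lemma Z_code_idcode : is_idcode Z_adj Z_code.
Proof. by rewrite (is_idcode_seqE _ _ mem_Z_vertices); vm_compute. Qed.

Lemma card_Z_code : #|Z_code| = 8.
Proof. by rewrite cardsE; apply/card_uniqP. Qed.

Lemma Z_idcode_card_ge8 C : is_idcode Z_adj C -> 8 <= #|C|.
Proof.
move=> C_idcode.
have uniq_branches :
  uniq ([:: u2; a2; b2; a0; u0; b0] ++ [:: u3; a3; b3; a1; u1; b1]) by [].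
apply: (leq_trans _ (count_mem_le_card C uniq_branches)).
rewrite count_cat -[8]/(4 + 4).
apply: leq_add; apply: (idcode_branch_count C_idcode) => //.
all: apply/setP => -[i lt_i_13]; rewrite !inE.
all: by do 13?case: i lt_i_13 => [|i] lt_i_13.
Qed.

Theorem mainTheorem15 :
  gammaID Z_adj = 8 /\ 3 * gammaID Z_adj < 2 * #|'I_13|.
Proof.
have gammaID_Z : gammaID Z_adj = 8.
  rewrite (gammaID_eq_card Z_code_idcode) ?card_Z_code //.
  exact: Z_idcode_card_ge8.
by rewrite gammaID_Z card_ord.
Qed.
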